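(* Let $k\ge1$, $G=(V,E)$ an inductively $k$-independent graph with $k$-independence ordering $v_1,\dots,v_n$, $f:2^V\to\mathbb{R}_{\ge0}$ submodular (not necessarily monotone) with $f(\emptyset)=0$, and $\beta>0$. The algorithm RANDOMIZED-PREEMPTIVE-GREEDY (described in the context) returns an independent set $S_{\mathrm{out}}$ of $G$ such that for every independent set $T$ of $G$, \[ f(T)\le 4\big(k(1+\beta)+1\big)\big(1+\beta^{-1}\big)\,\mathbb{E}[f(S_{\mathrm{out}})]. \]
   Context: $N(v)$ is the neighbourhood of $v$ (excluding $v$); $G$ is inductively $k$-independent with $k$-independence ordering $v_1,\dots,v_n$ if for every $i$, $G[N(v_i)\cap\{v_i,\dots,v_n\}]$ has no independent set of size more than $k$. For a graph with vertex ordering $u_1<\dots<u_m$ and $S$ a vertex set: $f_S(v)=f(S\cup\{v\})-f(S)$ and $\nu_f(S,u)=f_{S'}(u)$ with $S'=\{s\in S:s<u\}$. PREEMPTIVE-GREEDY on such an ordered graph (parameter $\beta$): start with $S=\emptyset$; for each vertex $v$ in order: let $C=N(v)\cap S$; if $f_S(v)\ge(1+\beta)\sum_{u\in C}\nu_f(S,u)$, replace $S$ by $(S\setminus C)\cup\{v\}$; return final $S$. RANDOMIZED-PREEMPTIVE-GREEDY: let $V'\subseteq V$ contain each vertex independently with probability $1/2$, and return the output of PREEMPTIVE-GREEDY run on the induced subgraph $G[V']$ with the ordering inherited from $v_1,\dots,v_n$, with $f$ restricted to subsets of $V'$, and parameter $\beta$. *)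

From mathcomp Require Import all_boot all_order all_algebra.
Set Implicit Arguments. Unset Strict Implicit. Unset Printing Implicit Defensive.
Import Order.TTheory GRing.Theory Num.Theory.
Local Open Scope ring_scope.

Section Defs.
Variable T : finType.

Definition simple_graph (e : rel T) : Prop := symmetric e /\ irreflexive e.

Definition nbhd (e : rel T) (v : T) : {set T} := [set u | e v u].

Definition independent (e : rel T) (I : {set T}) : bool :=
  [forall x in I, forall y in I, ~~ e x y].

Definition vertex_ordering (ord : seq T) : Prop :=
  uniq ord /\ forall x : T, x \in ord.

Definition rk (ord : seq T) (x : T) : nat := index x ord.

Definition k_independence_ordering (e : rel T) (ord : seq T) (k : nat) : Prop :=
  forall v : T, forall I : {set T},
    I \subset nbhd e v :&: [set u | (rk ord v <= rk ord u)%N] ->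
    independent e I -> (#|I| <= k)%N.

Variable R : realFieldType.

Definition submodular (f : {set T} -> R) : Prop :=
  forall A B : {set T}, f (A :|: B) + f (A :&: B) <= f A + f B.

Definition marg (f : {set T} -> R) (S : {set T}) (v : T) : R :=
  f (v |: S) - f S.

Definition nu (ord : seq T) (f : {set T} -> R) (S : {set T}) (u : T) : R :=
  marg f [set s in S | (rk ord s < rk ord u)%N] u.

Definition pg_step (e : rel T) (ord : seq T) (f : {set T} -> R) (beta : R)
    (S : {set T}) (v : T) : {set T} :=
  let C := nbhd e v :&: S in
  if (1 + beta) * (\sum_(u in C) nu ord f S u) <= marg f S v
  then v |: (S :\: C) else S.

(* PREEMPTIVE-GREEDY run on the induced subgraph G[V'] with the inherited
   ordering (vertices of V' processed in the order of ord); f restricted to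
   subsets of V' (the algorithm only evaluates f on subsets of V'). *)
Definition preemptive_greedy (e : rel T) (ord : seq T) (f : {set T} -> R)
    (beta : R) (V' : {set T}) : {set T} :=
  foldl (pg_step e ord f beta) set0 [seq v <- ord | v \in V'].

(* E[f(S_out)] for RANDOMIZED-PREEMPTIVE-GREEDY: V' is uniform over all
   subsets of V (each vertex kept independently with probability 1/2). *)
Definition expected_rpg (e : rel T) (ord : seq T) (f : {set T} -> R)
    (beta : R) : R :=
  (2 ^+ #|T|)^-1 * \sum_(V' : {set T}) f (preemptive_greedy e ord f beta V').

End Defs.

(* Fix the sample V' and an independent set I, and run PREEMPTIVE-GREEDY while
   recording the set A of all vertices it ever accepts.  Each acceptance pays
   the [nu]-values of the preempted neighbours, at most a 1/(1+beta) fraction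
   of its gain, so the total payment W satisfies beta W <= f S and
   f A <= W + f S for the current solution S.  A rejected vertex of I has gain
   below (1+beta) times the [nu]-values of its earlier neighbours in S; it is
   charged to them, and by k-independence each vertex of S is charged at most
   k times.  Hence f (A ∪ (I ∩ V')) <= (k(1+beta)+1)(1+1/beta) f S_out.
   Averaging over V': pairing V' with its complement gives f I <= 2 E f (I ∩ V'),
   and pairing V' with (V' ∩ I) ∪ ~(V' ∪ I), which has the same trace on I and
   meets V' only inside I, gives E f (I ∩ V') <= 2 E f (A ∪ (I ∩ V')). *)

From mathcomp Require Import all_boot all_order all_algebra.
From mathcomp Require Import ring lra.
Import Order.TTheory GRing.Theory Num.Theory.
Set Implicit Arguments. Unset Strict Implicit. Unset Printing Implicit Defensive.
Local Open Scope ring_scope.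

Lemma independentP (T : finType) (e : rel T) (I : {set T}) :
  reflect {in I &, forall x y, ~~ e x y} (independent e I).
Proof.
apply: (iffP forall_inP) => [eI x y xI yI | eI x xI].
  exact: (forall_inP (eI x xI)).
by apply/forall_inP => y; apply: eI.
Qed.

Lemma independent_subset (T : finType) (e : rel T) (A B : {set T}) :
  B \subset A -> independent e A -> independent e B.
Proof. by move=> BA /independentP eA; apply/independentP/(sub_in2 _ eA)/subsetP. Qed.

Lemma setIU1_subset (T : finType) (u : T) (A B : {set T}) :
  u \notin B -> A \subset B -> (u |: A) :&: B = A.
Proof.
move=> uB AB; rewrite setIUl (setIidPl AB).
suff -> : [set u] :&: B = set0 by rewrite set0U.
by apply/setP => x; rewrite !inE; case: eqP => // ->; rewrite (negbTE uB).
Qed.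

Lemma card_sets (T : finType) : #|{set T}| = (2 ^ #|T|)%N.
Proof. by rewrite -cardsT -card_powerset powersetT cardsT. Qed.

Section Submodular.
Variables (T : finType) (R : realFieldType) (f : {set T} -> R).
Hypothesis f_submod : submodular f.

Lemma marg_antimono (B B' : {set T}) (u : T) :
  B \subset B' -> u \notin B' -> marg f B' u <= marg f B u.
Proof.
move=> BB' uB'; have := f_submod (u |: B) B'.
by rewrite -setUA (setUidPr BB') setIU1_subset // /marg; lra.
Qed.

Lemma submod_setU_le (A X : {set T}) :
  f (A :|: X) <= f A + \sum_(t in X :\: A) marg f A t.
Proof.
have -> : A :|: X = A :|: (X :\: A) by rewrite setDE setUIr setUCr setIT.
have : {in X :\: A, forall t, t \notin A} by move=> t; rewrite inE => /andP[].
move: (X :\: A) => D; elim: {D}_.+1 {-2}D (ltnSn #|D|) => // n IH D.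
rewrite ltnS => leDn DA; have [-> | [t tD]] := set_0Vmem D.
  by rewrite setU0 big_set0 addr0.
have tA := DA t tD.
have ltDn : (#|D :\ t| < n)%N by move: leDn; rewrite (cardsD1 t) tD.
have IHt : f (A :|: (D :\ t)) <= f A + \sum_(x in D :\ t) marg f A x.
  by apply: IH ltDn _ => x /setD1P[_ /DA].
have margt : marg f (A :|: (D :\ t)) t <= marg f A t.
  by apply: marg_antimono; rewrite ?subsetUl // !inE negb_or tA eqxx.
rewrite (big_setD1 t tD) /= -{1}(setD1K tD) setUCA.
by move: margt IHt; rewrite /marg; lra.
Qed.

Hypothesis f0 : f set0 = 0.

Lemma sum_setI_ge (I : {set T}) :
  2 ^+ #|T| * f I <= 2 * \sum_(V : {set T}) f (I :&: V).
Proof.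
have -> : 2 ^+ #|T| * f I = \sum_(V : {set T}) f I.
  by rewrite sumr_const card_sets -[RHS]mulr_natl natrX.
rewrite mulr_natl mulr2n [X in _ <= _ + X](reindex_inj (@setC_inj T)) -big_split /=.
apply: ler_sum => V _; have := f_submod (I :&: V) (I :&: ~: V).
by rewrite -setIUr setUCr setIT setIACA setIid setICr setI0 f0 addr0.
Qed.

Hypothesis f_ge0 : forall A, 0 <= f A.

Lemma sum_setI_le (h : {set T} -> {set T}) (I : {set T}) :
  (forall V, h V \subset V) ->
  \sum_(V : {set T}) f (I :&: V) <= 2 * \sum_(V : {set T}) f (h V :|: (I :&: V)).
Proof.
move=> hV; pose g V := (V :&: I) :|: ~: (V :|: I).
have gK : involutive g.
  by move=> V; apply/setP => x; rewrite !inE; case: (x \in V); case: (x \in I).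
have IgV V : I :&: g V = I :&: V.
  by apply/setP => x; rewrite !inE; case: (x \in V); case: (x \in I).
rewrite mulr_natl mulr2n [X in _ <= _ + X](reindex_inj (inv_inj gK)) -big_split /=.
apply: ler_sum => V _; rewrite IgV.
have hVg : h V :&: h (g V) \subset I :&: V.
  apply: subset_trans (setISS (hV V) (hV (g V))) _.
  by apply/subsetP => x; rewrite !inE; case: (x \in V); case: (x \in I).
have := f_submod (h V :|: (I :&: V)) (h (g V) :|: (I :&: V)).
rewrite -setUIl (setUidPr hVg).
by have := f_ge0 ((h V :|: (I :&: V)) :|: (h (g V) :|: (I :&: V))); lra.
Qed.

End Submodular.

Lemma rk_inj (T : finType) (ord : seq T) :
  (forall x, x \in ord) -> injective (rk ord).
Proof.
move=> ord_all x y; rewrite /rk => eq_index.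
by rewrite -[x](nth_index x (ord_all x)) eq_index nth_index.
Qed.

Lemma rk_pairwise (T : finType) (ord : seq T) :
  uniq ord -> pairwise (fun x y => (rk ord x < rk ord y)%N) ord.
Proof.
case: ord => [|x0 s] // ord_uniq; apply/(pairwiseP x0) => i j.
by rewrite !inE => ilt jlt ij; rewrite /rk !index_uniq.
Qed.

Section Ranks.
Variables (T : finType) (R : realFieldType) (ord : seq T) (f : {set T} -> R).
Hypotheses (ord_inj : injective (rk ord)) (f_submod : submodular f) (f0 : f set0 = 0).
Local Notation rank := (rk ord).

Definition below (S : {set T}) (u : T) : {set T} := [set s in S | (rank s < rank u)%N].

Lemma nuE (S : {set T}) (u : T) : nu ord f S u = marg f (below S u) u.
Proof. by []. Qed.

Lemma nu_antimono (S S' : {set T}) (u : T) :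
  below S u \subset below S' u -> nu ord f S' u <= nu ord f S u.
Proof. by move=> sub; apply: marg_antimono; rewrite // inE ltnn andbF. Qed.

Lemma sum_nu (S : {set T}) : \sum_(u in S) nu ord f S u = f S.
Proof.
elim: {S}_.+1 {-2}S (ltnSn #|S|) => // n IH S; rewrite ltnS => leSn.
have [-> | [m mS]] := set_0Vmem S; first by rewrite big_set0 f0.
have [M MS Mmax] : exists2 M, M \in S & forall x, x \in S -> (rank x <= rank M)%N.
  by have [M] := @arg_maxnP _ m (mem S) rank mS; exists M.
have belowM : below S M = S :\ M.
  apply/setP => x; rewrite !inE; case xS: (x \in S); rewrite ?andbF //=.
  by rewrite ltn_neqAle (inj_eq ord_inj) Mmax ?andbT.
have below_rest u : u \in S :\ M -> below (S :\ M) u = below S u.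
  rewrite !inE => /andP[_ uS]; apply/setP => x; rewrite !inE.
  by case: eqP => [-> | _] //=; rewrite MS ltnNge Mmax.
rewrite (big_setD1 M MS) (eq_bigr (nu ord f (S :\ M))) => [|u uSM]; last first.
  by rewrite !nuE below_rest.
rewrite IH; last by move: leSn; rewrite (cardsD1 M) MS.
by rewrite /= nuE belowM /marg setD1K // subrK.
Qed.

Lemma setD_nu_le (S C : {set T}) :
  C \subset S -> f S - f (S :\: C) <= \sum_(u in C) nu ord f S u.
Proof.
move=> CS; rewrite -{1}(sum_nu S) -(sum_nu (S :\: C)) (big_setID C) /= (setIidPr CS).
suff : \sum_(u in S :\: C) nu ord f S u <= \sum_(u in S :\: C) nu ord f (S :\: C) u.
  by lra.
apply: ler_sum => u _; apply: nu_antimono; apply/subsetP => x.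
by rewrite !inE => /andP[/andP[_ ->] ->].
Qed.

Variables (S C : {set T}) (v : T).
Hypotheses (CS : C \subset S) (Sv : {in S, forall x, (rank x < rank v)%N}).

Let vS : v \notin S.
Proof. by apply/negP => /Sv; rewrite ltnn. Qed.

Lemma preempt_ge : f S + marg f S v - \sum_(u in C) nu ord f S u <= f (v |: (S :\: C)).
Proof.
have := f_submod (v |: (S :\: C)) S; have := setD_nu_le CS.
rewrite -setUA (setUidPr (subsetDl S C)) setIU1_subset ?subsetDl // /marg.
lra.
Qed.

Lemma nu_preempt_new : nu ord f (v |: (S :\: C)) v = marg f (S :\: C) v.
Proof.
rewrite nuE; congr marg; apply/setP => x; rewrite !inE.
case: eqP => [-> | _] /=; first by rewrite ltnn (negbTE vS) andbF.
by case xS: (x \in S); rewrite ?andbF // Sv ?andbT.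
Qed.

Lemma nu_preempt_old u : u \in S -> nu ord f S u <= nu ord f (v |: (S :\: C)) u.
Proof.
move=> uS; apply: nu_antimono; apply/subsetP => x; rewrite !inE.
case: eqP => [-> | _] /=; first by rewrite ltnNge ltnW ?Sv.
by case/andP => /andP[_ ->] ->.
Qed.

End Ranks.

Section PreemptiveGreedy.
Variables (T : finType) (R : realFieldType) (e : rel T) (ord : seq T) (k : nat).
Variables (f : {set T} -> R) (beta : R).
Hypotheses (e_sym : symmetric e) (e_irr : irreflexive e).
Hypotheses (ord_uniq : uniq ord) (ord_all : forall x, x \in ord).
Hypotheses (f_submod : submodular f) (f0 : f set0 = 0) (beta_gt0 : 0 < beta).

Let ord_inj : injective (rk ord) := rk_inj ord_all.
Local Notation rank := (rk ord).

Lemma independent_pg_step (S : {set T}) (v : T) :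
  independent e S -> independent e (pg_step e ord f beta S v).
Proof.
move=> /independentP eS; rewrite /pg_step; case: ifP => _; last exact/independentP.
have eSC x : x \in S :\: (nbhd e v :&: S) -> ~~ e v x.
  by rewrite !inE => /andP[]; rewrite negb_and => /orP[] // /negbTE ->.
apply/independentP => x y; rewrite !in_setU1.
case/predU1P => [-> | xSC] /predU1P[-> | ySC]; first by rewrite e_irr.
- exact: eSC.
- by rewrite e_sym; apply: eSC.
- by apply: eS; [move: xSC | move: ySC]; rewrite inE => /andP[].
Qed.

Lemma independent_preemptive_greedy (V : {set T}) :
  independent e (preemptive_greedy e ord f beta V).
Proof.
rewrite /preemptive_greedy; elim/last_ind: [seq _ <- _ | _] => [|l v IHl].
  by apply/independentP => x; rewrite inE.
by rewrite foldl_rcons; apply: independent_pg_step.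
Qed.

Definition conflicts (S : {set T}) (v : T) : {set T} := nbhd e v :&: S.

Definition preempt (S : {set T}) (v : T) : {set T} := v |: (S :\: conflicts S v).

Definition accepts (S : {set T}) (v : T) : bool :=
  (1 + beta) * \sum_(u in conflicts S v) nu ord f S u <= marg f S v.

Definition pg_trace_step (SA : {set T} * {set T}) (v : T) : {set T} * {set T} :=
  if accepts SA.1 v then (preempt SA.1 v, v |: SA.2) else SA.

Definition pg_trace (l : seq T) : {set T} * {set T} :=
  foldl pg_trace_step (set0, set0) l.

Lemma pg_trace_fst (l : seq T) : (pg_trace l).1 = foldl (pg_step e ord f beta) set0 l.
Proof.
elim/last_ind: l => [|l v IHl] //; rewrite /pg_trace !foldl_rcons -IHl.
by rewrite /pg_trace_step /pg_step /accepts; case: ifP.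
Qed.

Definition accepted (V : {set T}) : {set T} := (pg_trace [seq v <- ord | v \in V]).2.

Variable I : {set T}.
Hypotheses (ord_kind : k_independence_ordering e ord k) (I_indep : independent e I).

Definition missed (A P : {set T}) : {set T} := I :&: P :\: A.

Definition charges (A P : {set T}) (u : T) : nat :=
  #|[set t in missed A P | e u t && (rank u < rank t)%N]|.

Definition missed_gain (A P : {set T}) : R := \sum_(t in missed A P) marg f A t.

Definition total_charge (S A P : {set T}) : R :=
  \sum_(u in S) nu ord f S u * (charges A P u)%:R.

(* After processing [P]: [S] is the current solution, [A] the set of vertices
   ever accepted, [W] the total payment for preemptions, and the gain of each
   rejected vertex of [I] is charged to its earlier neighbours in [S]. *)
Inductive greedy_inv (S A P : {set T}) : Prop :=
  GreedyInv (W : R) of S \subset A & A \subset P & {in S, forall u, 0 <= nu ord f S u}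
    & 0 <= W & beta * W <= f S & f A <= W + f S
    & missed_gain A P <= (1 + beta) * (k%:R * W + total_charge S A P).

Lemma charges_le (A P : {set T}) (u : T) : (charges A P u <= k)%N.
Proof.
apply: (@ord_kind u).
  by apply/subsetP => t; rewrite !inE => /and3P[_ -> /ltnW ->].
apply: independent_subset I_indep.
by apply/subsetP => t; rewrite !inE => /and3P[/and3P[_ -> _]].
Qed.

Lemma total_charge_le (S A P : {set T}) :
  {in S, forall u, 0 <= nu ord f S u} -> total_charge S A P <= k%:R * f S.
Proof.
move=> nuS; rewrite -(sum_nu ord_inj f0) mulr_sumr; apply: ler_sum => u uS.
by rewrite mulrC ler_wpM2r ?nuS // ler_nat charges_le.
Qed.

Lemma greedy_inv0 : greedy_inv set0 set0 set0.
Proof.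
apply: (@GreedyInv _ _ _ 0); rewrite ?f0 ?mulr0 ?add0r //.
  by move=> u; rewrite inE.
by rewrite /missed_gain /total_charge /missed setI0 set0D !big_set0 !mulr0.
Qed.

Lemma missed_accept (A P : {set T}) (v : T) :
  v \notin P -> missed (v |: A) (v |: P) = missed A P.
Proof.
move=> vP; apply/setP => t; rewrite !inE.
by case: eqP => [-> | _] //=; rewrite (negbTE vP) !andbF.
Qed.

Lemma missed_reject (A P : {set T}) (v : T) : v \notin A ->
  missed A (v |: P) = if v \in I then v |: missed A P else missed A P.
Proof.
move=> vA; apply/setP => t.
case: ifP => vI; rewrite !inE; case: eqP => [-> | _] //=; by rewrite ?vA ?vI ?andbF.
Qed.

Lemma charges_reject (A P : {set T}) (u v : T) :
  v \notin P -> v \notin A -> v \in I -> (rank u < rank v)%N ->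
  charges A (v |: P) u = (e u v + charges A P u)%N.
Proof.
move=> vP vA vI uv; rewrite /charges missed_reject // vI.
rewrite (cardsD1 v) !inE eqxx uv andbT /=.
congr (_ + _)%N; apply: eq_card => t; rewrite !inE.
by case: eqP => [-> | _] //=; rewrite (negbTE vP) !andbF.
Qed.

Lemma total_charge_reject (S A P : {set T}) (v : T) :
  v \notin P -> v \notin A -> v \in I -> {in S, forall u, (rank u < rank v)%N} ->
  total_charge S A (v |: P) =
    \sum_(u in conflicts S v) nu ord f S u + total_charge S A P.
Proof.
move=> vP vA vI Sv; rewrite /total_charge.
rewrite (eq_bigr (fun u =>
    nu ord f S u * (e u v)%:R + nu ord f S u * (charges A P u)%:R));
  last by move=> u uS; rewrite charges_reject ?Sv // natrD mulrDr.
rewrite big_split /=; congr (_ + _).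
rewrite (big_setID (nbhd e v)) /= [X in _ + X]big1 ?addr0 => [|u]; last first.
  by rewrite !inE e_sym => /andP[/negbTE -> _]; rewrite /= mulr0.
rewrite setIC; apply: eq_bigr => u.
by rewrite !inE e_sym => /andP[-> _]; rewrite /= mulr1.
Qed.

Lemma missed_gain_accept (A P : {set T}) (v : T) :
  v \notin P -> missed_gain (v |: A) (v |: P) <= missed_gain A P.
Proof.
move=> vP; rewrite /missed_gain missed_accept //; apply: ler_sum => t.
rewrite !inE => /and3P[tA _ tP]; apply: (marg_antimono f_submod (subsetUr _ _)).
by rewrite !inE negb_or tA andbT; apply: contraNneq vP => <-.
Qed.

Lemma total_charge_accept (S A P : {set T}) (v : T) :
  v \notin P -> total_charge S (v |: A) (v |: P) = total_charge S A P.
Proof. by move=> vP; rewrite /total_charge /charges missed_accept. Qed.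

Lemma nu_preempt_ge0 (S : {set T}) (v : T) :
  {in S, forall x, (rank x < rank v)%N} -> {in S, forall u, 0 <= nu ord f S u} ->
  accepts S v -> {in preempt S v, forall u, 0 <= nu ord f (preempt S v) u}.
Proof.
move=> Sv nuS acc u /setU1P[-> | /setDP[uS _]]; last first.
  exact: le_trans (nuS u uS) (nu_preempt_old f_submod _ Sv uS).
have vS : v \notin S by apply/negP => /Sv; rewrite ltnn.
rewrite nu_preempt_new //; apply: le_trans (marg_antimono f_submod (subsetDl _ _) vS).
apply: le_trans acc; apply: mulr_ge0; first by rewrite addr_ge0 // ltW.
by apply: sumr_ge0 => x /setIP[_ /nuS].
Qed.

Lemma total_charge_preempt (S A P : {set T}) (v : T) :
  {in S, forall x, (rank x < rank v)%N} -> {in S, forall u, 0 <= nu ord f S u} ->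
  {in preempt S v, forall u, 0 <= nu ord f (preempt S v) u} ->
  total_charge S A P <=
    k%:R * \sum_(u in conflicts S v) nu ord f S u + total_charge (preempt S v) A P.
Proof.
move=> Sv nuS nuS'; set C := conflicts S v.
have CS : C \subset S := subsetIr _ _.
have vS : v \notin S by apply/negP => /Sv; rewrite ltnn.
rewrite /total_charge (big_setID C) /= (setIidPr CS); apply: lerD.
  rewrite mulr_sumr; apply: ler_sum => u uC.
  by rewrite [_ * nu _ _ _ _]mulrC ler_wpM2l ?nuS ?(subsetP CS) // ler_nat charges_le.
rewrite /preempt big_setU1 /=; last by rewrite inE (negbTE vS) andbF.
rewrite ler_wpDl ?mulr_ge0 ?nuS' ?setU11 //; apply: ler_sum => u /setDP[uS _].
by rewrite ler_wpM2r // (nu_preempt_old f_submod C Sv uS).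
Qed.

Lemma greedy_inv_accept (S A P : {set T}) (v : T) :
  {in P, forall x, (rank x < rank v)%N} -> accepts S v ->
  greedy_inv S A P -> greedy_inv (preempt S v) (v |: A) (v |: P).
Proof.
move=> Pv acc [W SA AP nuS W0 bW fA gain].
set C := conflicts S v; set sC := \sum_(u in C) nu ord f S u.
have vP : v \notin P by apply/negP => /Pv; rewrite ltnn.
have vA : v \notin A := contra (subsetP AP v) vP.
have Sv : {in S, forall x, (rank x < rank v)%N}.
  by move=> x /(subsetP SA) /(subsetP AP) /Pv.
have CS : C \subset S := subsetIr _ _.
have sC0 : 0 <= sC by apply: sumr_ge0 => u /(subsetP CS) /nuS.
have margA : marg f A v <= marg f (S :\: C) v.
  by apply: (marg_antimono f_submod _ vA); apply: subset_trans SA; apply: subsetDl.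
have fS' : f S + marg f S v - sC <= f (preempt S v) :=
  preempt_ge ord_inj f_submod f0 CS Sv.
have fSC : f S - f (S :\: C) <= sC := setD_nu_le ord_inj f_submod f0 CS.
have nuS' := nu_preempt_ge0 Sv nuS acc.
move: acc; rewrite /accepts -/C -/sC mulrDl mul1r => acc.
apply: (@GreedyInv _ _ _ (W + sC)) => //.
- apply/subsetP => x /setU1P[-> | /setDP[xS _]]; first exact: setU11.
  by rewrite setU1r // (subsetP SA).
- exact: setUS.
- exact: addr_ge0.
- by move: fS'; rewrite mulrDr; lra.
- by move: fS' margA fSC; rewrite /preempt /marg -/C; lra.
rewrite total_charge_accept //; apply: le_trans (missed_gain_accept A vP) _.
apply: le_trans gain _.
apply: ler_wpM2l; first by rewrite addr_ge0 // ltW.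
by rewrite mulrDr -addrA lerD2l total_charge_preempt.
Qed.

Lemma greedy_inv_reject (S A P : {set T}) (v : T) :
  {in P, forall x, (rank x < rank v)%N} -> ~~ accepts S v ->
  greedy_inv S A P -> greedy_inv S A (v |: P).
Proof.
move=> Pv rej [W SA AP nuS W0 bW fA gain].
have vP : v \notin P by apply/negP => /Pv; rewrite ltnn.
have vA : v \notin A := contra (subsetP AP v) vP.
apply: (@GreedyInv _ _ _ W) => //; first exact: subset_trans AP (subsetUr _ _).
have [vI | vI] := boolP (v \in I); last first.
  by rewrite /missed_gain /total_charge /charges missed_reject // (negbTE vI).
have Sv : {in S, forall x, (rank x < rank v)%N}.
  by move=> x /(subsetP SA) /(subsetP AP) /Pv.
have vM : v \notin missed A P by rewrite !inE (negbTE vP) !andbF.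
have margA : marg f A v <= marg f S v := marg_antimono f_submod SA vA.
rewrite total_charge_reject // /missed_gain missed_reject // vI big_setU1 //=.
by move: rej gain; rewrite /accepts /missed_gain -ltNge !mulrDr; lra.
Qed.

Lemma greedy_inv_trace (l : seq T) : pairwise (fun x y => (rank x < rank y)%N) l ->
  greedy_inv (pg_trace l).1 (pg_trace l).2 [set x in l].
Proof.
elim/last_ind: l => [_ | l v IHl].
  have -> : [set x in [::]] = set0 :> {set T} by apply/setP => x; rewrite !inE.
  exact: greedy_inv0.
rewrite pairwise_rcons => /andP[/allP lv /IHl inv].
have -> : [set x in rcons l v] = v |: [set x in l].
  by apply/setP => x; rewrite !inE mem_rcons in_cons.
have Pv : {in [set x in l], forall x, (rank x < rank v)%N}.
  by move=> x; rewrite inE => /lv.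
rewrite /pg_trace foldl_rcons -/(pg_trace l) /pg_trace_step.
by case: ifPn => acc; [apply: greedy_inv_accept | apply: greedy_inv_reject].
Qed.

Lemma greedy_inv_run (V : {set T}) :
  greedy_inv (preemptive_greedy e ord f beta V) (accepted V) V.
Proof.
have := greedy_inv_trace (pairwise_filter (mem V) (rk_pairwise ord_uniq)).
have -> : [set x in [seq v <- ord | v \in V]] = V.
  by apply/setP => x; rewrite !inE mem_filter ord_all andbT.
by rewrite pg_trace_fst.
Qed.

Lemma greedy_inv_bound (S A P : {set T}) : greedy_inv S A P ->
  f (A :|: (I :&: P)) <= (k%:R * (1 + beta) + 1) * (1 + beta^-1) * f S.
Proof.
case=> W _ _ nuS _ bW fA gain.
set K := k%:R * (1 + beta) + 1.
have beta1 : 0 <= 1 + beta by rewrite addr_ge0 // ltW.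
have K0 : 0 <= K by rewrite /K addr_ge0 // mulr_ge0.
have W_le : W <= beta^-1 * f S by rewrite ler_pdivlMl.
have gain_le : missed_gain A P <= (1 + beta) * (k%:R * W + k%:R * f S).
  by apply: le_trans gain _; rewrite ler_wpM2l ?lerD2l ?total_charge_le.
have -> : K * (1 + beta^-1) * f S = K * (beta^-1 * f S + f S) by ring.
apply: le_trans (_ : K * (W + f S) <= _); last by rewrite ler_wpM2l // lerD2r.
have -> : K * (W + f S) = W + f S + (1 + beta) * (k%:R * W + k%:R * f S).
  by rewrite /K; ring.
have := submod_setU_le f_submod A (I :&: P).
by move: gain_le; rewrite /missed_gain /missed; lra.
Qed.

End PreemptiveGreedy.

Theorem theorem7 (R : realFieldType) (T : finType) (e : rel T) (ord : seq T)
    (k : nat) (f : {set T} -> R) (beta : R) :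
  (1 <= k)%N ->
  simple_graph e ->
  vertex_ordering ord ->
  k_independence_ordering e ord k ->
  (forall A : {set T}, 0 <= f A) ->
  f set0 = 0 ->
  submodular f ->
  0 < beta ->
  (forall V' : {set T}, independent e (preemptive_greedy e ord f beta V')) /\
  (forall S : {set T}, independent e S ->
     f S <= 4 * (k%:R * (1 + beta) + 1) * (1 + beta^-1)
              * expected_rpg e ord f beta).
Proof.
move=> _ [e_sym e_irr] [ord_uniq ord_all] ord_kind f_ge0 f0 f_submod beta_gt0.
split=> [V | I I_indep]; first exact: independent_preemptive_greedy.
have run V :=
  greedy_inv_run e_sym ord_uniq ord_all f_submod f0 beta_gt0 ord_kind I_indep V.
have accepted_sub V : accepted e ord f beta V \subset V by case: (run V).
have accepted_bound : \sum_(V : {set T}) f (accepted e ord f beta V :|: (I :&: V)) <=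
    (k%:R * (1 + beta) + 1) * (1 + beta^-1)
      * \sum_(V : {set T}) f (preemptive_greedy e ord f beta V).
  by rewrite mulr_sumr; apply: ler_sum => V _; apply: greedy_inv_bound (run V).
have := sum_setI_le f_submod f_ge0 I accepted_sub.
have := sum_setI_ge f_submod f0 I.
rewrite /expected_rpg mulrCA ler_pdivlMl ?exprn_gt0 //.
lra.
Qed.
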